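(* Let $\mathbb{F}$ be a finite field with $q=p^k\geq 4$ elements ($p$ prime), and let $\Gamma$ be a connected finite graph with vertex set $V$ and edge set $E$, each edge $e$ being oriented with initial vertex $e(0)$ and terminal vertex $e(1)$. Assume $|V|\leq |E|$. Then $\Gamma$ is $\mathbb{F}$-colorable if and only if $A_\Gamma\in \mathbf{C}$, i.e. if and only if there exists a map $\alpha:E\to \mathbb{F}\setminus\{0,-1\}$ such that the $|V|\times|E|$ matrix $\pi_\alpha(A_\Gamma)=[A_\Gamma(v,e,\alpha(e))]_{v\in V,e\in E}$ has rank less than $\min(|E|,|V|)$.
   Context: An $\mathbb{F}$-coloring of $\Gamma$ is a map $V\to\mathbb{F}^{*}=\mathbb{F}\setminus\{0\}$ such that no two adjacent vertices receive the same value; $\Gamma$ is $\mathbb{F}$-colorable if it has one. The array $A_\Gamma\in\mathbb{F}^{|V|\cdot|E|\cdot(q-1)}$ is indexed by $(v,e,c)$ with $v\in V$, $e\in E$, $c\in\mathbb{F}\setminus\{0\}$, and defined by $A_\Gamma(v,e,c)=1$ if $v=e(0)$, $A_\Gamma(v,e,c)=c$ if $v=e(1)$, and $A_\Gamma(v,e,c)=0$ otherwise. For $\alpha:E\to\mathbb{F}\setminus\{0,-1\}$, $\pi_\alpha$ sends an array $A$ indexed by $(v,e,c)$ to the $|V|\times|E|$ matrix $[A(v,e,\alpha(e))]_{v,e}$. Let $\mathbf{D}$ be the determinantal variety of $|V|\times|E|$ matrices of rank $<\min(|E|,|V|)$, $\mathbf{D}_\alpha=\pi_\alpha^{*}\mathbf{D}$,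 and the coloring variety $\mathbf{C}=\bigcup_\alpha \mathbf{D}_\alpha\subset\mathbb{A}^{|V||E|(q-1)}$, the union over all $\alpha:E\to\mathbb{F}\setminus\{0,-1\}$. *)

From HB Require Import structures.
From mathcomp Require Import all_boot all_order all_algebra all_field.
Set Implicit Arguments. Unset Strict Implicit. Unset Printing Implicit Defensive.
Import GRing.Theory.
Local Open Scope ring_scope.

(* An oriented finite (multi)graph: vertex type V, edge type E,
   each edge e has initial vertex src e = e(0) and terminal vertex tgt e = e(1). *)

Definition adjacent (V E : finType) (src tgt : E -> V) : rel V :=
  fun u v => [exists e, ((src e == u) && (tgt e == v)) || ((src e == v) && (tgt e == u))].

Definition connected_graph (V E : finType) (src tgt : E -> V) : Prop :=
  (0 < #|V|)%N /\ forall u v : V, connect (adjacent src tgt) u v.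

Definition F_coloring (F : fieldType) (V E : finType) (src tgt : E -> V)
  (f : V -> F) : Prop :=
  (forall v, f v != 0) /\ (forall u v, adjacent src tgt u v -> f u != f v).

Definition F_colorable (F : fieldType) (V E : finType) (src tgt : E -> V) : Prop :=
  exists f : V -> F, F_coloring src tgt f.

(* Arrays indexed by (v, e, c), c in F \ {0}; we represent them as functions
   V -> E -> F -> F (only values at c <> 0 are ever used). *)
Definition array (F : fieldType) (V E : finType) := V -> E -> F -> F.

Definition A_Gamma (F : fieldType) (V E : finType) (src tgt : E -> V) : array F V E :=
  fun v e c => if v == src e then 1 else if v == tgt e then c else 0.

Definition admissible (F : fieldType) (E : finType) (alpha : E -> F) : Prop :=
  forall e, alpha e != 0 /\ alpha e != -1.

Definition pi_alpha (F : fieldType) (V E : finType) (alpha : E -> F)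
  (A : array F V E) : 'M[F]_(#|V|, #|E|) :=
  \matrix_(i < #|V|, j < #|E|) A (enum_val i) (enum_val j) (alpha (enum_val j)).

Definition in_D (F : fieldType) (m n : nat) (M : 'M[F]_(m, n)) : Prop :=
  (\rank M < minn n m)%N.

Definition in_D_alpha (F : fieldType) (V E : finType) (alpha : E -> F)
  (A : array F V E) : Prop := in_D (pi_alpha alpha A).

Definition in_coloring_variety (F : fieldType) (V E : finType)
  (A : array F V E) : Prop :=
  exists alpha : E -> F, admissible alpha /\ in_D_alpha alpha A.

From mathcomp Require Import all_boot all_order all_algebra all_field.
Set Implicit Arguments. Unset Strict Implicit. Unset Printing Implicit Defensive.
Import GRing.Theory.
Local Open Scope ring_scope.

(* A left kernel vector [y] of [pi_alpha alpha A_Gamma] is a vertex labelling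
   [x] with [x (e 0) + alpha e * x (e 1) = 0] along every edge [e]. Along an
   edge, [x (e 0) != 0] iff [x (e 1) != 0], so by connectivity a nonzero [x]
   vanishes nowhere, and [alpha e != -1] forbids equal labels at the two ends:
   [x] is a coloring. Conversely, a coloring [f] is such a labelling for
   [alpha e = - f (e 0) / f (e 1)], which avoids [0] and [-1]. Since
   [#|V| <= #|E|], rank deficiency is exactly a nontrivial left kernel. *)

Lemma not_row_freeP (F : fieldType) (m n : nat) (M : 'M[F]_(m, n)) :
  reflect (exists2 y : 'rV_m, y != 0 & y *m M = 0) (~~ row_free M).
Proof.
apply: (iffP idP) => [|[y y_neq0 yM0]].
  rewrite -kermx_eq0 => /rowV0Pn[y /sub_kermxP yM0 y_neq0]; by exists y.
by apply: contra y_neq0 => /row_free_inj/(_ y 0); rewrite mul0mx => /(_ yM0) ->.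
Qed.

Section ColoringKernel.

Variables (F : fieldType) (V E : finType) (src tgt : E -> V).

Definition vertex_row (x : V -> F) : 'rV[F]_#|V| := \row_i x (enum_val i).

Definition edge_balanced (alpha : E -> F) (x : V -> F) : Prop :=
  forall e, x (src e) + alpha e * x (tgt e) = 0.

Lemma vertex_row_eq0 (x : V -> F) : (vertex_row x == 0) = [forall v, x v == 0].
Proof.
apply/eqP/forallP => [x0 v | x0]; last by apply/rowP => i; rewrite !mxE; apply/eqP.
by have /rowP/(_ (enum_rank v)) := x0; rewrite !mxE enum_rankK => ->.
Qed.

Lemma vertex_row_mul_pi_A_Gamma (alpha : E -> F) (x : V -> F) (e : E) :
  src e != tgt e ->
  (vertex_row x *m pi_alpha alpha (A_Gamma src tgt)) 0 (enum_rank e)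
    = x (src e) + alpha e * x (tgt e).
Proof.
move=> loopless_e; rewrite mxE (reindex enum_rank) /=; last exact/onW_bij/enum_rank_bij.
under eq_bigr => v _ do rewrite !mxE !enum_rankK.
rewrite (bigD1 (src e)) // (bigD1 (tgt e)) 1?eq_sym //= big1 ?addr0.
  by rewrite /A_Gamma eqxx eq_sym (negbTE loopless_e) eqxx mulr1 mulrC.
move=> v /andP[/negbTE v_neq_src /negbTE v_neq_tgt].
by rewrite /A_Gamma v_neq_src v_neq_tgt mulr0.
Qed.

Hypothesis loopless : forall e, src e != tgt e.

Lemma in_D_alpha_A_GammaP (alpha : E -> F) : (#|V| <= #|E|)%N ->
  in_D_alpha alpha (A_Gamma src tgt) <->
  exists2 x : V -> F, (exists v, x v != 0) & edge_balanced alpha x.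
Proof.
move=> VleE; rewrite /in_D_alpha /in_D (minn_idPr VleE).
rewrite ltn_neqAle rank_leq_row andbT.
have mulE x e := vertex_row_mul_pi_A_Gamma alpha x (loopless e).
split => [/not_row_freeP[y y_neq0 yM0] | [x [v xv_neq0] x_bal]].
  pose x v := y 0 (enum_rank v).
  have y_row : y = vertex_row x by apply/rowP => i; rewrite mxE /x enum_valK.
  exists x => [|e]; last by have /rowP/(_ (enum_rank e)) := yM0; rewrite y_row mulE mxE.
  by move: y_neq0; rewrite y_row vertex_row_eq0 => /forallPn.
apply/not_row_freeP; exists (vertex_row x).
  by rewrite vertex_row_eq0; apply/forallPn; exists v.
by apply/rowP => j; rewrite -(enum_valK j) mulE x_bal mxE.
Qed.

Lemma coloring_edge_balanced (f : V -> F) : F_coloring src tgt f ->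
  let alpha e := - (f (src e) / f (tgt e)) in
  admissible alpha /\ edge_balanced alpha f.
Proof.
move=> [f_neq0 f_adj] alpha; split => [e | e]; last first.
  by rewrite /alpha mulNr divfK ?f_neq0 // subrr.
rewrite oppr_eq0 mulf_neq0 ?invr_eq0 ?f_neq0 //= eqr_opp.
rewrite (can2_eq (divfK _) (mulfK _)) ?f_neq0 //.
by rewrite mul1r f_adj //; apply/existsP; exists e; rewrite !eqxx.
Qed.

Lemma edge_balanced_nowhere_zero (alpha : E -> F) (x : V -> F) (v0 : V) :
  connected_graph src tgt -> admissible alpha -> edge_balanced alpha x ->
  x v0 != 0 -> forall v, x v != 0.
Proof.
move=> [_ conn] adm x_bal xv0_neq0 v.
have edge_neq0 e : (x (src e) != 0) = (x (tgt e) != 0).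
  move/eqP: (x_bal e); rewrite addr_eq0 => /eqP ->.
  by rewrite oppr_eq0 mulf_eq0 (negbTE (adm e).1).
have closed_support : closed (adjacent src tgt) [pred v | x v != 0].
  by move=> u w /existsP[e /orP[] /andP[/eqP <- /eqP <-]]; rewrite !inE edge_neq0.
by have := closed_connect closed_support (conn v0 v); rewrite !inE xv0_neq0 => <-.
Qed.

Lemma edge_balanced_coloring (alpha : E -> F) (x : V -> F) :
  admissible alpha -> edge_balanced alpha x -> (forall v, x v != 0) ->
  F_coloring src tgt x.
Proof.
move=> adm x_bal x_neq0; split => // u v /existsP[e /orP[] /andP[/eqP <- /eqP <-]].
all: apply/eqP => x_eq; move: (x_bal e); rewrite x_eq -[X in X + _]mul1r -mulrDl.
all: move/eqP; rewrite mulf_eq0 (negbTE (x_neq0 _)) orbF addr_eq0 eq_sym eqr_oppLR.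
all: by rewrite (negbTE (adm e).2).
Qed.

End ColoringKernel.

Theorem mainTheorem1 (F : finFieldType) (V E : finType) (src tgt : E -> V) :
  (4 <= #|F|)%N ->
  (forall e, src e != tgt e) ->
  connected_graph src tgt ->
  (#|V| <= #|E|)%N ->
  (@F_colorable F V E src tgt <-> in_coloring_variety (@A_Gamma F V E src tgt)).
Proof.
move=> _ loopless conn VleE; split.
- case=> f f_col; have [adm f_bal] := coloring_edge_balanced f_col.
  eexists; split; first exact: adm.
  apply/(in_D_alpha_A_GammaP loopless _ VleE); exists f => //.
  by have [/card_gt0P[v _] _] := conn; exists v; exact: f_col.1.
- case=> alpha [adm /(in_D_alpha_A_GammaP loopless _ VleE)[x [v xv_neq0] x_bal]].
  exists x; apply: (edge_balanced_coloring adm x_bal).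
  exact: (edge_balanced_nowhere_zero conn adm x_bal xv_neq0).
Qed.
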